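(* Let $v:\mathbb T\times\mathbb R\to\mathbb R$, $v=\frac12(v_1-v_{-1})$, where $v_{\pm1}$ satisfy: (H2) $\int_0^1v^2(\theta,r)\,d\theta\ne0$ for every $r\in\mathbb R$; (H3) $v_{\pm1}(\cdot,r)$ are trigonometric polynomials of degree at most $d$ for every $r$; (H4) for every rational $p/q$ with $\gcd(p,q)=1$, $1\le|q|\le2d$, and every $\theta$, $\sum_{k=1}^q[v_{-1}(\theta+k/q,p/q)-v_1(\theta+k/q,p/q)]^2\ne0$. Let $p/q$ be an Imaginary Rational, i.e. $\gcd(p,q)=1$ and $d<|q|<\varepsilon^{-b}$. Then for every $\theta$, $\sigma^2(\theta,p/q)\ne0$, where $\sigma^2(\theta,r)=\frac1q\sum_{k=0}^{q-1}v^2(\theta+kr,r)$.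
   Context: $\varepsilon>0$ and $b>0$ are parameters; $d$ is a positive integer; $\mathbb T=\mathbb R/\mathbb Z$. *)

From Stdlib Require Import Reals ZArith.
From Coquelicot Require Import Coquelicot.
Open Scope R_scope.

Fixpoint fsum (n : nat) (f : nat -> R) : R :=
  match n with
  | O => 0
  | S m => fsum m f + f m
  end.

(* f : T -> R (modelled as a function R -> R) is a real trigonometric
   polynomial of degree at most d:
   f(θ) = Σ_{j=0}^{d} (a_j cos(2πjθ) + b_j sin(2πjθ)). *)
Definition trig_poly_deg (d : nat) (f : R -> R) : Prop :=
  exists a b : nat -> R, forall th : R,
    f th = sum_f_R0 (fun j => a j * cos (2 * PI * INR j * th)
                            + b j * sin (2 * PI * INR j * th)) d.

Definition vfun (v1 vm1 : R -> R -> R) (th r : R) : R :=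
  (v1 th r - vm1 th r) / 2.

(* σ²(θ, r) = (1/q) Σ_{k=0}^{|q|-1} v²(θ + k r, r), with q the denominator of r *)
Definition sigma2 (v : R -> R -> R) (q : Z) (th r : R) : R :=
  / IZR q * fsum (Z.abs_nat q) (fun k => (v (th + INR k * r) r) ^ 2).

(* sigma^2(th, p/q) is (up to the factor |q|/q) the |q|-point equidistributed quadrature of
   v(., p/q)^2 along the orbit th + k p/q.  If |q| > 2d, v^2 is a trigonometric polynomial of
   degree <= 2d < |q|, and this quadrature is exact on every frequency 0 < |m| < |q|: the
   geometric sum telescopes, since q does not divide m p.  Hence sigma^2 = (sign q) * int v^2,
   which is nonzero by (H2).  If d < |q| <= 2d and sigma^2 vanished, v would vanish on the
   orbit, which modulo 1 is the whole grid th + Z/q because p is invertible mod q; this makes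
   the sum in (H4) vanish. *)

From Stdlib Require Import Reals ZArith Lia Lra.
From Coquelicot Require Import Coquelicot.
Open Scope R_scope.

Lemma sin_cos_2IZRPI (k : Z) : sin (2 * IZR k * PI) = 0 /\ cos (2 * IZR k * PI) = 1.
Proof.
  split.
  - apply sin_eq_0_1; exists (2 * k)%Z; rewrite mult_IZR; ring.
  - replace (2 * IZR k * PI) with (2 * (IZR k * PI)) by ring.
    rewrite cos_2a_sin, sin_eq_0_1 by (exists k; ring); ring.
Qed.

Lemma sin_period_Z (x : R) (k : Z) : sin (x + 2 * IZR k * PI) = sin x.
Proof. destruct (sin_cos_2IZRPI k) as [s c]; rewrite sin_plus, s, c; ring. Qed.

Lemma cos_period_Z (x : R) (k : Z) : cos (x + 2 * IZR k * PI) = cos x.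
Proof. destruct (sin_cos_2IZRPI k) as [s c]; rewrite cos_plus, s, c; ring. Qed.

Lemma cos_add_opp_PI2 (x : R) : cos (x + - (PI / 2)) = sin x.
Proof. rewrite cos_plus, cos_neg, sin_neg, cos_PI2, sin_PI2; ring. Qed.

Lemma fsum_ext (N : nat) (f g : nat -> R) :
  (forall n, (n < N)%nat -> f n = g n) -> fsum N f = fsum N g.
Proof.
  induction N as [|N IH]; intros E; simpl; [reflexivity|].
  rewrite IH by (intros; apply E; lia).
  rewrite E by lia; reflexivity.
Qed.

Lemma fsum_plus (N : nat) (f g : nat -> R) :
  fsum N (fun n => f n + g n) = fsum N f + fsum N g.
Proof. induction N as [|N IH]; simpl; [ring | rewrite IH; ring]. Qed.

Lemma fsum_scal (N : nat) (c : R) (f : nat -> R) :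
  fsum N (fun n => c * f n) = c * fsum N f.
Proof. induction N as [|N IH]; simpl; [ring | rewrite IH; ring]. Qed.

Lemma fsum_const (N : nat) (c : R) : fsum N (fun _ => c) = INR N * c.
Proof. induction N as [|N IH]; simpl fsum; [simpl; ring | rewrite IH, S_INR; ring]. Qed.

Lemma fsum_eq0 (N : nat) (f : nat -> R) :
  (forall n, (n < N)%nat -> f n = 0) -> fsum N f = 0.
Proof. intros E; rewrite (fsum_ext N f (fun _ => 0)), fsum_const by exact E; ring. Qed.

Lemma fsum_ge0 (N : nat) (f : nat -> R) : (forall n, 0 <= f n) -> 0 <= fsum N f.
Proof. intros P; induction N as [|N IH]; simpl; [lra | specialize (P N); lra]. Qed.

Lemma fsum_sq_eq0 (N : nat) (f : nat -> R) :
  fsum N (fun n => f n ^ 2) = 0 -> forall n, (n < N)%nat -> f n = 0.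
Proof.
  induction N as [|N IH]; intros S n Hn; [lia|]; cbn [fsum] in S.
  pose proof (fsum_ge0 N _ (fun k => pow2_ge_0 (f k))).
  pose proof (pow2_ge_0 (f N)).
  destruct (Nat.eq_dec n N) as [->|].
  - destruct (Req_dec (f N) 0) as [|Hf]; [assumption|].
    pose proof (pow_nonzero _ 2 Hf); lra.
  - apply IH; [lra | lia].
Qed.

Lemma telescope_cos (a h : R) (N : nat) :
  2 * sin (h / 2) * fsum N (fun n => cos (a + INR n * h))
  = sin (a + INR N * h - h / 2) - sin (a - h / 2).
Proof.
  induction N as [|N IH]; simpl fsum.
  - simpl INR; rewrite Rmult_0_l, Rplus_0_r; ring.
  - rewrite Rmult_plus_distr_l, IH, S_INR.
    replace (a + (INR N + 1) * h - h / 2) with ((a + INR N * h) + h / 2) by lra.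
    rewrite sin_plus, sin_minus; ring.
Qed.

Lemma fsum_cos_full_turns (a h : R) (N : nat) (k : Z) :
  sin (h / 2) <> 0 -> INR N * h = 2 * IZR k * PI ->
  fsum N (fun n => cos (a + INR n * h)) = 0.
Proof.
  intros Hs Hk; pose proof (telescope_cos a h N) as T.
  replace (a + INR N * h - h / 2) with ((a - h / 2) + 2 * IZR k * PI) in T by lra.
  rewrite sin_period_Z in T.
  apply (Rmult_eq_reg_l (2 * sin (h / 2))); lra.
Qed.

Definition wave (m : Z) (phi x : R) : R := cos (2 * PI * IZR m * x + phi).

Lemma is_RInt_wave (m : Z) (phi : R) : m <> 0%Z -> is_RInt (wave m phi) 0 1 0.
Proof.
  intros Hm; pose proof PI_RGT_0.
  assert (Hm' : IZR m <> 0) by (apply not_0_IZR; exact Hm).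
  set (F x := sin (2 * PI * IZR m * x + phi) / (2 * PI * IZR m)).
  assert (F1 : F 1 = F 0).
  { unfold F; replace (2 * PI * IZR m * 1 + phi) with (phi + 2 * IZR m * PI) by ring.
    rewrite sin_period_Z; f_equal; f_equal; ring. }
  assert (I : is_RInt (wave m phi) 0 1 (minus (F 1) (F 0))).
  { apply (is_RInt_derive F).
    - intros x _; unfold F, wave; auto_derive; [auto | field; split; lra].
    - intros x _; apply (@ex_derive_continuous R_AbsRing R_NormedModule).
      unfold wave; auto_derive; auto. }
  rewrite F1, minus_eq_zero in I; exact I.
Qed.

Definition trig_term (a b : nat -> R) (j : nat) (x : R) : R :=
  a j * cos (2 * PI * INR j * x) + b j * sin (2 * PI * INR j * x).

Lemma trig_term_mul (a b : nat -> R) (j k : nat) (x : R) :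
  trig_term a b j x * trig_term a b k x =
    (a j * a k + b j * b k) / 2 * wave (Z.of_nat j - Z.of_nat k) 0 x
  + (a j * a k - b j * b k) / 2 * wave (Z.of_nat j + Z.of_nat k) 0 x
  + (a j * b k + b j * a k) / 2 * wave (Z.of_nat j + Z.of_nat k) (- (PI / 2)) x
  + (b j * a k - a j * b k) / 2 * wave (Z.of_nat j - Z.of_nat k) (- (PI / 2)) x.
Proof.
  unfold trig_term, wave; rewrite minus_IZR, plus_IZR, <- !INR_IZR_INZ.
  rewrite !cos_add_opp_PI2, !Rplus_0_r.
  replace (2 * PI * (INR j - INR k) * x) with (2 * PI * INR j * x - 2 * PI * INR k * x) by ring.
  replace (2 * PI * (INR j + INR k) * x) with (2 * PI * INR j * x + 2 * PI * INR k * x) by ring.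
  rewrite cos_minus, cos_plus, sin_minus, sin_plus; field.
Qed.

Lemma sum_f_R0_sqr (u : nat -> R) (d : nat) :
  sum_f_R0 u d ^ 2 = sum_f_R0 (fun j => sum_f_R0 (fun k => u j * u k) d) d.
Proof.
  rewrite <- Rsqr_pow2; unfold Rsqr; rewrite scal_sum.
  apply sum_eq; intros j _; rewrite scal_sum.
  apply sum_eq; intros k _; ring.
Qed.

Section Quadrature.

Variables (th r : R) (N : nat).

Definition quadrature_exact (g : R -> R) : Prop :=
  ex_RInt g 0 1 /\ fsum N (fun n => g (th + INR n * r)) = INR N * RInt g 0 1.

Lemma quadrature_exact_ext (f g : R -> R) :
  (forall x, f x = g x) -> quadrature_exact f -> quadrature_exact g.
Proof.
  intros E [If Sf]; split.
  - exact (ex_RInt_ext f g 0 1 (fun x _ => E x) If).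
  - rewrite <- (RInt_ext f) by (intros; apply E).
    rewrite <- Sf; apply fsum_ext; intros; symmetry; apply E.
Qed.

Lemma quadrature_exact_const (c : R) : quadrature_exact (fun _ => c).
Proof.
  pose proof (is_RInt_const 0 1 c) as I; split; [eexists; exact I|].
  rewrite (is_RInt_unique _ _ _ _ I), fsum_const.
  cbv [scal mult]; simpl; cbv [mult]; simpl; ring.
Qed.

Lemma quadrature_exact_plus (f g : R -> R) :
  quadrature_exact f -> quadrature_exact g -> quadrature_exact (fun x => f x + g x).
Proof.
  intros [If Sf] [Ig Sg]; split; [exact (ex_RInt_plus f g 0 1 If Ig)|].
  rewrite fsum_plus, Sf, Sg, (RInt_plus f g) by assumption.
  unfold plus; simpl; ring.
Qed.

Lemma quadrature_exact_scal (c : R) (f : R -> R) :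
  quadrature_exact f -> quadrature_exact (fun x => c * f x).
Proof.
  intros [If Sf]; split; [exact (ex_RInt_scal f 0 1 c If)|].
  rewrite fsum_scal, Sf, (RInt_scal f) by assumption.
  cbv [scal mult]; simpl; cbv [mult]; simpl; ring.
Qed.

Lemma quadrature_exact_sum (F : nat -> R -> R) (n : nat) :
  (forall j, (j <= n)%nat -> quadrature_exact (F j)) ->
  quadrature_exact (fun x => sum_f_R0 (fun j => F j x) n).
Proof.
  induction n as [|n IH]; intros HF; simpl; [apply HF; lia|].
  apply (quadrature_exact_plus (fun x => sum_f_R0 (fun j => F j x) n)).
  - apply IH; intros; apply HF; lia.
  - apply HF; lia.
Qed.

(* [N] steps of size [r] make a whole number of turns, and no frequency [0 < |m| < N] is
   resonant with [r]. *)
Variable z : Z.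
Hypothesis N_mul_r : INR N * r = IZR z.
Hypothesis sin_PI_mul_r_neq0 :
  forall m : Z, m <> 0%Z -> (Z.abs m < Z.of_nat N)%Z -> sin (PI * IZR m * r) <> 0.

Lemma quadrature_exact_wave (m : Z) (phi : R) :
  (Z.abs m < Z.of_nat N)%Z -> quadrature_exact (wave m phi).
Proof.
  intros Hm; destruct (Z.eq_dec m 0) as [->|Hm0].
  - apply (quadrature_exact_ext (fun _ => cos phi)); [|apply quadrature_exact_const].
    intros x; unfold wave; f_equal; ring.
  - pose proof (is_RInt_wave m phi Hm0) as I; split; [eexists; exact I|].
    rewrite (is_RInt_unique _ _ _ _ I), Rmult_0_r.
    rewrite (fsum_ext N _ (fun n => cos ((2 * PI * IZR m * th + phi) + INR n * (2 * PI * IZR m * r))))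
      by (intros; unfold wave; f_equal; ring).
    apply (fsum_cos_full_turns _ _ _ (m * z)).
    + replace (2 * PI * IZR m * r / 2) with (PI * IZR m * r) by field; auto.
    + rewrite mult_IZR, <- N_mul_r; ring.
Qed.

Lemma quadrature_exact_trig_poly_sqr (d : nat) (f : R -> R) :
  (2 * d < N)%nat -> trig_poly_deg d f -> quadrature_exact (fun x => f x ^ 2).
Proof.
  intros Hd [a [b Ef]].
  set (u j x := trig_term a b j x).
  apply (quadrature_exact_ext (fun x => sum_f_R0 (fun j => sum_f_R0
           (fun k => u j x * u k x) d) d)).
  { intros x; rewrite Ef, sum_f_R0_sqr; reflexivity. }
  apply (quadrature_exact_sum (fun j x => sum_f_R0 (fun k => u j x * u k x) d)); intros j Hj.
  apply (quadrature_exact_sum (fun k x => u j x * u k x)); intros k Hk.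
  eapply quadrature_exact_ext; [intros x; symmetry; apply trig_term_mul|].
  apply quadrature_exact_plus; [apply quadrature_exact_plus; [apply quadrature_exact_plus|]|].
  all: apply quadrature_exact_scal, quadrature_exact_wave; lia.
Qed.

End Quadrature.

Lemma sin_PI_mul_frac_neq0 (p q m : Z) :
  Z.gcd p q = 1%Z -> m <> 0%Z -> (Z.abs m < Z.abs q)%Z ->
  sin (PI * IZR m * (IZR p / IZR q)) <> 0.
Proof.
  intros Hpq Hm Hmq Hsin; apply sin_eq_0_0 in Hsin as [k Hk].
  assert (Hq : IZR q <> 0) by (apply not_0_IZR; lia).
  assert (E : (m * p = k * q)%Z).
  { apply eq_IZR; rewrite !mult_IZR; pose proof PI_RGT_0.
    apply (Rmult_eq_reg_l (PI / IZR q)); [|apply Rmult_integral_contrapositive; split;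
      [lra | apply Rinv_neq_0_compat; exact Hq]].
    replace (PI / IZR q * (IZR m * IZR p)) with (PI * IZR m * (IZR p / IZR q)) by (field; exact Hq).
    rewrite Hk; field; exact Hq. }
  assert (Hdiv : (q | m)%Z).
  { apply (Z.gauss q p m); [exists k; lia | rewrite Z.gcd_comm; exact Hpq]. }
  apply Znumtheory.Zdivide_bounds in Hdiv; lia.
Qed.

Lemma INR_abs_nat_mul_frac (p q : Z) :
  q <> 0%Z -> INR (Z.abs_nat q) * (IZR p / IZR q) = IZR (p * Z.sgn q).
Proof.
  intros Hq; assert (IZR q <> 0) by (apply not_0_IZR; exact Hq).
  rewrite INR_IZR_INZ, Zabs2Nat.id_abs, mult_IZR.
  destruct (Z_lt_le_dec 0 q).
  - rewrite Z.abs_eq, Z.sgn_pos by lia; field; assumption.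
  - rewrite Z.abs_neq, Z.sgn_neg by lia; rewrite !opp_IZR; field; assumption.
Qed.

Lemma exists_inverse_mod (p q n : Z) :
  Z.gcd p q = 1%Z -> q <> 0%Z -> exists K, (0 <= K < Z.abs q)%Z /\ (q | K * p - n)%Z.
Proof.
  intros Hpq Hq; destruct (Z.gcd_bezout p q 1 Hpq) as [u [v Euv]].
  exists ((n * u) mod Z.abs q)%Z; split; [apply Z.mod_pos_bound; lia|].
  assert (Hk : (q | (n * u) mod Z.abs q - n * u)%Z).
  { apply Z.divide_abs_l; rewrite Z.mod_eq by lia.
    exists (- (n * u / Z.abs q))%Z; ring. }
  replace ((n * u) mod Z.abs q * p - n)%Z
    with (((n * u) mod Z.abs q - n * u) * p - n * v * q)%Z.
  2:{ rewrite <- (Z.mul_1_r n) at 5; rewrite <- Euv; ring. }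
  apply Z.divide_sub_r; [apply Z.divide_mul_l; exact Hk | apply Z.divide_mul_r, Z.divide_refl].
Qed.

Lemma trig_poly_deg_periodic (d : nat) (f : R -> R) :
  trig_poly_deg d f -> forall (x : R) (k : Z), f (x + IZR k) = f x.
Proof.
  intros [a [b Ef]] x k; rewrite !Ef; apply sum_eq; intros j _.
  replace (2 * PI * INR j * (x + IZR k))
    with (2 * PI * INR j * x + 2 * IZR (Z.of_nat j * k) * PI)
    by (rewrite mult_IZR, <- INR_IZR_INZ; ring).
  rewrite cos_period_Z, sin_period_Z; reflexivity.
Qed.

Lemma trig_poly_deg_lincomb (d : nat) (c1 c2 : R) (f g : R -> R) :
  trig_poly_deg d f -> trig_poly_deg d g -> trig_poly_deg d (fun x => c1 * f x + c2 * g x).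
Proof.
  intros [a [b Ef]] [a' [b' Eg]].
  exists (fun j => c1 * a j + c2 * a' j), (fun j => c1 * b j + c2 * b' j); intros x.
  rewrite Ef, Eg, !scal_sum, <- plus_sum; apply sum_eq; intros j _; ring.
Qed.

(* Since [p] is invertible mod [q], the points [th + k p/q], [0 <= k < |q|], meet every
   class [th + n/q] modulo 1. *)
Lemma periodic_eq0_frac_orbit (f : R -> R) (p q : Z) (th : R) :
  Z.gcd p q = 1%Z -> q <> 0%Z -> (forall x k, f (x + IZR k) = f x) ->
  (forall k, (k < Z.abs_nat q)%nat -> f (th + INR k * (IZR p / IZR q)) = 0) ->
  forall n : Z, f (th + IZR n / IZR q) = 0.
Proof.
  intros Hpq Hq Hper Hzero n.
  assert (HqR : IZR q <> 0) by (apply not_0_IZR; exact Hq).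
  destruct (exists_inverse_mod p q n Hpq Hq) as [K [HK [w Ew]]].
  replace (th + IZR n / IZR q) with (th + INR (Z.to_nat K) * (IZR p / IZR q) + IZR (- w)).
  - rewrite Hper; apply Hzero; lia.
  - rewrite INR_IZR_INZ, Z2Nat.id, opp_IZR by lia.
    replace (IZR n) with (IZR K * IZR p - IZR w * IZR q)
      by (rewrite <- !mult_IZR, <- minus_IZR; f_equal; lia).
    field; exact HqR.
Qed.

Lemma sigma2_eq0 (v : R -> R -> R) (q : Z) (th r : R) :
  q <> 0%Z -> sigma2 v q th r = 0 ->
  forall k, (k < Z.abs_nat q)%nat -> v (th + INR k * r) r = 0.
Proof.
  intros Hq Hs; apply Rmult_integral in Hs as [Hs | Hs].
  - exfalso; revert Hs; apply Rinv_neq_0_compat, not_0_IZR, Hq.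
  - exact (fsum_sq_eq0 _ _ Hs).
Qed.

Lemma sigma2_neq0_of_quadrature (v : R -> R -> R) (q : Z) (th r : R) :
  q <> 0%Z -> quadrature_exact th r (Z.abs_nat q) (fun x => v x r ^ 2) ->
  RInt (fun x => v x r ^ 2) 0 1 <> 0 -> sigma2 v q th r <> 0.
Proof.
  intros Hq [_ Hsum] HI; unfold sigma2; rewrite Hsum.
  assert (0 < INR (Z.abs_nat q)) by (apply lt_0_INR; lia).
  apply Rmult_integral_contrapositive; split;
    [apply Rinv_neq_0_compat, not_0_IZR, Hq | apply Rmult_integral_contrapositive; lra].
Qed.

Theorem lemma2 (eps b : R) (d : nat) (v1 vm1 : R -> R -> R)
  (Heps : 0 < eps) (Hb : 0 < b) (Hd : (0 < d)%nat)
  (* (H2) *)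
  (H2 : forall r : R, RInt (fun th => (vfun v1 vm1 th r) ^ 2) 0 1 <> 0)
  (* (H3) *)
  (H3 : forall r : R, trig_poly_deg d (fun th => v1 th r)
                    /\ trig_poly_deg d (fun th => vm1 th r))
  (* (H4) *)
  (H4 : forall (p q : Z), Z.gcd p q = 1%Z ->
          (1 <= Z.abs q <= 2 * Z.of_nat d)%Z ->
          forall th : R,
            fsum (Z.abs_nat q)
              (fun k => (vm1 (th + INR (S k) / IZR q) (IZR p / IZR q)
                         - v1 (th + INR (S k) / IZR q) (IZR p / IZR q)) ^ 2) <> 0)
  (p q : Z) (Hpq : Z.gcd p q = 1%Z)
  (Hq_low : (Z.of_nat d < Z.abs q)%Z)
  (Hq_up : IZR (Z.abs q) < Rpower eps (- b)) :
  forall th : R, sigma2 (vfun v1 vm1) q th (IZR p / IZR q) <> 0.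
Proof.
  intros th; set (r := IZR p / IZR q).
  assert (Hq : q <> 0%Z) by lia.
  assert (Hv : trig_poly_deg d (fun x => vfun v1 vm1 x r)).
  { destruct (H3 r) as [T1 Tm].
    destruct (trig_poly_deg_lincomb d (/ 2) (- / 2) _ _ T1 Tm) as [a [b' E]].
    exists a, b'; intros x; rewrite <- E; unfold vfun; field. }
  destruct (Z_le_gt_dec (Z.abs q) (2 * Z.of_nat d)) as [Hsmall | Hlarge].
  - intros Hs; apply (H4 p q Hpq ltac:(lia) th), fsum_eq0; intros n _.
    pose proof (periodic_eq0_frac_orbit _ p q th Hpq Hq (trig_poly_deg_periodic _ _ Hv)
                  (sigma2_eq0 _ _ _ _ Hq Hs) (Z.of_nat (S n))) as Hvn.
    rewrite <- INR_IZR_INZ in Hvn; unfold vfun in Hvn; fold r.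
    assert (E : v1 (th + INR (S n) / IZR q) r = vm1 (th + INR (S n) / IZR q) r) by lra.
    rewrite E; ring.
  - apply sigma2_neq0_of_quadrature; [exact Hq | | apply H2].
    apply (quadrature_exact_trig_poly_sqr _ _ _ (p * Z.sgn q) (INR_abs_nat_mul_frac p q Hq)) with d;
      [| lia | exact Hv].
    intros m Hm; rewrite Zabs2Nat.id_abs; exact (sin_PI_mul_frac_neq0 p q m Hpq Hm).
Qed.
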